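(* Let $A$ be a finite nonempty set of positive real numbers. Then $$\left|\frac{A+A}{A+A}\right|\geq 2|A|^2-1.$$
   Context: For a finite set $A\subset\mathbb{R}$ of positive reals, $\frac{A+A}{A+A}:=\left\{\frac{a+b}{c+d}: a,b,c,d\in A\right\}$. $|X|$ denotes the cardinality of a finite set $X$. *)

From Stdlib Require Import Reals List.
Import ListNotations.
Open Scope R_scope.

Definition sumlist (A : list R) : list R :=
  flat_map (fun a => map (fun b => a + b) A) A.

Definition ratiolist (A : list R) : list R :=
  flat_map (fun s => map (fun t => s / t) (sumlist A)) (sumlist A).

Definition ratio_card (A : list R) : nat :=
  length (nodup Req_EM_T (ratiolist A)).

From Stdlib Require Import Reals RList List Wf_nat Lia Lra.
Import ListNotations.
Open Scope R_scope.

(* View each pair (a, c) of A x A as a point of the upper half plane; then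
   (a + b) / (c + d) is the slope of the sum of the points (a, c) and (b, d).
   Sort the lines through the origin that carry points by slope, s_1 < ... < s_k,
   with n_i points on line i.  Every s_i is attained (take p + p), and the sums of a
   point of line i with a point of line i + 1 have slopes strictly between s_i and
   s_(i+1); such a slope is strictly increasing in the ratio of the two heights, so a
   staircase argument yields n_i + n_(i+1) - 1 distinct values.  Altogether this gives
   2 |A|^2 + 1 - n_1 - n_k ratios, and n_1 = n_k = 1 because the extreme ratios
   max A / min A and min A / max A are attained only once. *)

Lemma filter_filter_impl {T} (f g : T -> bool) (l : list T) :
  (forall x, f x = true -> g x = true) -> filter f (filter g l) = filter f l.
Proof.
  intros Hfg; induction l as [|x l IH]; simpl; [reflexivity|].
  destruct (g x) eqn:Eg; simpl; destruct (f x) eqn:Ef; rewrite ?IH; try reflexivity.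
  rewrite (Hfg x Ef) in Eg; discriminate.
Qed.

Lemma length_le_1 {T} (l : list T) :
  NoDup l -> (forall x y, In x l -> In y l -> x = y) -> (length l <= 1)%nat.
Proof.
  destruct l as [|x [|y l]]; simpl; intros Hnd Heq; try lia.
  inversion Hnd as [|? ? Hx]; subst.
  exfalso; apply Hx; left; apply Heq; simpl; auto.
Qed.

Lemma length_filter_one_out {T} (p : T -> bool) (l : list T) (m : T) :
  NoDup l -> In m l -> (forall x, In x l -> p x = false <-> x = m) ->
  length l = S (length (filter p l)).
Proof.
  intros Hnd Hm Hp.
  pose proof (filter_length p l) as Hsplit.
  set (rest := filter (fun x => negb (p x)) l) in Hsplit.
  assert (Hrest : forall x, In x rest <-> x = m).
  { intros x; unfold rest; rewrite filter_In, Bool.negb_true_iff; split.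
    - intros [Hx Hpx]; apply Hp; auto.
    - intros ->; split; [|apply Hp]; auto. }
  assert (length rest <= 1)%nat.
  { apply length_le_1; [apply NoDup_filter; auto|].
    intros x y Hx Hy; apply Hrest in Hx, Hy; congruence. }
  destruct rest as [|r rest'].
  - exfalso; apply (proj2 (Hrest m) eq_refl).
  - simpl in *; lia.
Qed.

Lemma NoDup_list_prod {S T} (A : list S) (B : list T) :
  NoDup A -> NoDup B -> NoDup (list_prod A B).
Proof.
  intros HA HB; induction HA as [|a A Ha HA IH]; simpl; [constructor|].
  apply NoDup_app; auto.
  - apply NoDup_map_NoDup_ForallPairs; auto. intros x y _ _ H; congruence.
  - intros p Hp1 Hp2. apply in_map_iff in Hp1 as [b [<- _]].
    apply in_prod_iff in Hp2; tauto.
Qed.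

Lemma MinRlist_In (l : list R) : l <> [] -> In (MinRlist l) l.
Proof.
  induction l as [|x [|y l] IH]; intros Hne; [congruence|left; reflexivity|].
  change (In (Rmin x (MinRlist (y :: l))) (x :: y :: l)).
  unfold Rmin; destruct (Rle_dec x (MinRlist (y :: l))).
  - left; reflexivity.
  - right; apply IH; discriminate.
Qed.

Lemma MaxRlist_In (l : list R) : l <> [] -> In (MaxRlist l) l.
Proof.
  intros Hne; apply MaxRlist_P2; destruct l as [|x l]; [congruence|].
  exists x; left; reflexivity.
Qed.

Definition below (m : R) (X : list R) : list R :=
  filter (fun x => if Rlt_dec x m then true else false) X.

Definition above (m : R) (X : list R) : list R :=
  filter (fun x => if Rlt_dec m x then true else false) X.

Lemma In_below m X x : In x (below m X) <-> In x X /\ x < m.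
Proof. unfold below; rewrite filter_In; destruct Rlt_dec; intuition discriminate. Qed.

Lemma In_above m X x : In x (above m X) <-> In x X /\ m < x.
Proof. unfold above; rewrite filter_In; destruct Rlt_dec; intuition discriminate. Qed.

Lemma length_below_max X :
  NoDup X -> X <> [] -> length X = S (length (below (MaxRlist X) X)).
Proof.
  intros HX Hne; apply length_filter_one_out with (MaxRlist X); auto using MaxRlist_In.
  intros x Hx; pose proof (MaxRlist_P1 X x Hx).
  destruct Rlt_dec; split; intros Heq; try discriminate; lra.
Qed.

Lemma length_above_min X :
  NoDup X -> X <> [] -> length X = S (length (above (MinRlist X) X)).
Proof.
  intros HX Hne; apply length_filter_one_out with (MinRlist X); auto using MinRlist_In.
  intros x Hx; pose proof (MinRlist_P1 X x Hx).
  destruct Rlt_dec; split; intros Heq; try discriminate; lra.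
Qed.

Section Staircase.

Variable f : R -> R -> R.

Lemma staircase (X Y : list R) :
  NoDup X -> NoDup Y -> X <> [] -> Y <> [] ->
  (forall x x' y, In x X -> In x' X -> In y Y -> x < x' -> f x y < f x' y) ->
  (forall x y y', In x X -> In y Y -> In y' Y -> y < y' -> f x y' < f x y) ->
  exists L, NoDup L /\ (length X + length Y = S (length L))%nat /\
    forall r, In r L -> exists x y, In x X /\ In y Y /\ r = f x y.
Proof.
  remember (length X + length Y)%nat as n eqn:Hn.
  revert X Y Hn; induction n as [n IH] using lt_wf_ind;
    intros X Y Hn HX HY HXne HYne HfX HfY.
  set (xm := MaxRlist X); set (ym := MinRlist Y).
  assert (Hxm : In xm X) by (apply MaxRlist_In; auto).
  assert (Hym : In ym Y) by (apply MinRlist_In; auto).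
  assert (Hcorner : forall x y, In x X -> In y Y -> x < xm \/ ym < y -> f x y < f xm ym).
  { intros x y Hx Hy Hoff.
    destruct (Rle_lt_or_eq_dec x xm (MaxRlist_P1 X x Hx)) as [Hlt | ->];
      destruct (Rle_lt_or_eq_dec ym y (MinRlist_P1 Y y Hy)) as [Hgt | <-].
    - apply Rlt_trans with (f xm y); [apply HfX|apply HfY]; auto.
    - apply HfX; auto.
    - apply HfY; auto.
    - destruct Hoff; lra. }
  (* drop the corner row or column, recurse, and add the corner value on top *)
  assert (Hrecurse : forall X0 Y0, incl X0 X -> incl Y0 Y -> NoDup X0 -> NoDup Y0 ->
            X0 <> [] -> Y0 <> [] -> (forall x y, In x X0 -> In y Y0 -> x < xm \/ ym < y) ->
            S (length X0 + length Y0) = n ->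
            exists L, NoDup L /\ n = S (length L) /\
              forall r, In r L -> exists x y, In x X /\ In y Y /\ r = f x y).
  { intros X0 Y0 HX0 HY0 Hnd0 Hnd0' Hne0 Hne0' Hoff Hn0.
    destruct (IH (length X0 + length Y0)%nat ltac:(lia) X0 Y0) as [L [HL [HlenL HLin]]];
      auto.
    exists (f xm ym :: L); split; [|split].
    - constructor; auto. intros Hin.
      destruct (HLin _ Hin) as [x [y [Hx [Hy Hr]]]].
      pose proof (Hcorner x y (HX0 x Hx) (HY0 y Hy) (Hoff x y Hx Hy)); lra.
    - simpl; lia.
    - intros r [<-|Hr]; [exists xm, ym; auto|].
      destruct (HLin _ Hr) as [x [y [Hx [Hy ->]]]]; exists x, y; auto. }
  pose proof (length_below_max X HX HXne) as HlenX.
  pose proof (length_above_min Y HY HYne) as HlenY.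
  fold xm in HlenX; fold ym in HlenY.
  destruct (below xm X) as [|x0 X0] eqn:EX; [destruct (above ym Y) as [|y0 Y0] eqn:EY|].
  - exists [f xm ym]; split; [|split].
    + constructor; [intros []|constructor].
    + simpl in *; lia.
    + intros r [<-|[]]; exists xm, ym; auto.
  - apply Hrecurse with X (y0 :: Y0); auto using incl_refl.
    + intros y Hy; rewrite <- EY in Hy; apply In_above in Hy; tauto.
    + rewrite <- EY; apply NoDup_filter; auto.
    + discriminate.
    + intros x y _ Hy; rewrite <- EY in Hy; apply In_above in Hy; tauto.
    + simpl in *; lia.
  - apply Hrecurse with (x0 :: X0) Y; auto using incl_refl.
    + intros x Hx; rewrite <- EX in Hx; apply In_below in Hx; tauto.
    + rewrite <- EX; apply NoDup_filter; auto.
    + discriminate.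
    + intros x y Hx _; rewrite <- EX in Hx; apply In_below in Hx; tauto.
    + simpl in *; lia.
Qed.

End Staircase.

Lemma Rdiv_lt_cross n d n' d' : 0 < d -> 0 < d' -> n * d' < n' * d -> n / d < n' / d'.
Proof.
  intros Hd Hd' H. apply (Rmult_lt_reg_r (d * d')); [nra|].
  replace (n / d * (d * d')) with (n * d') by (field; lra).
  replace (n' / d' * (d * d')) with (n' * d) by (field; lra).
  lra.
Qed.

(* The slope of [(a y, y) + (b w, w)]. *)
Definition line_mediant (a b y w : R) : R := (a * y + b * w) / (y + w).

Lemma line_mediant_between a b y w :
  a < b -> 0 < y -> 0 < w -> a < line_mediant a b y w < b.
Proof.
  intros Hab Hy Hw; unfold line_mediant; split.
  - replace a with (a / 1) at 1 by field. apply Rdiv_lt_cross; nra.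
  - replace b with (b / 1) at 2 by field. apply Rdiv_lt_cross; nra.
Qed.

Lemma line_mediant_lt a b y w y' w' :
  a < b -> 0 < y -> 0 < w -> 0 < y' -> 0 < w' -> w * y' < w' * y ->
  line_mediant a b y w < line_mediant a b y' w'.
Proof.
  intros Hab Hy Hw Hy' Hw' Hratio; unfold line_mediant.
  apply Rdiv_lt_cross; [lra|lra|].
  assert (0 < (b - a) * (w' * y - w * y')) by (apply Rmult_lt_0_compat; lra).
  nra.
Qed.

Definition slope (p : R * R) : R := fst p / snd p.

Definition mediant (p q : R * R) : R := (fst p + fst q) / (snd p + snd q).

Definition mediants (P : list (R * R)) : list R :=
  flat_map (fun p => map (mediant p) P) P.

Lemma In_mediants P p q : In p P -> In q P -> In (mediant p q) (mediants P).
Proof.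
  intros Hp Hq; apply in_flat_map; exists p; split; auto; apply in_map; auto.
Qed.

Lemma mediants_incl P P' : incl P' P -> incl (mediants P') (mediants P).
Proof.
  intros HP r Hr; apply in_flat_map in Hr as [p [Hp Hr]].
  apply in_map_iff in Hr as [q [<- Hq]]; apply In_mediants; auto.
Qed.

Lemma mediant_diag p : 0 < snd p -> mediant p p = slope p.
Proof. intros Hp; unfold mediant, slope; field; lra. Qed.

Lemma point_on_slope p : 0 < snd p -> p = (slope p * snd p, snd p).
Proof.
  intros Hp; destruct p as [x y]; unfold slope; simpl in *; f_equal; field; lra.
Qed.

Lemma mediant_on_lines u q : 0 < snd u -> 0 < snd q ->
  mediant u q = line_mediant (slope u) (slope q) (snd u) (snd q).
Proof.
  intros Hu Hq; unfold mediant, line_mediant.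
  rewrite (point_on_slope u Hu) at 1; rewrite (point_on_slope q Hq) at 1; reflexivity.
Qed.

Lemma NoDup_heights_on_line (P : list (R * R)) (s : R) :
  NoDup P -> (forall p, In p P -> slope p = s /\ 0 < snd p) -> NoDup (map snd P).
Proof.
  intros HP HPline; apply NoDup_map_NoDup_ForallPairs; auto.
  intros p p' Hp Hp' Hsnd.
  destruct (HPline p Hp) as [Hs Hpos]; destruct (HPline p' Hp') as [Hs' Hpos'].
  rewrite (point_on_slope p Hpos), (point_on_slope p' Hpos'), Hs, Hs', Hsnd.
  reflexivity.
Qed.

Lemma mediants_between_lines (U Q : list (R * R)) (a b : R) :
  a < b -> NoDup U -> NoDup Q -> U <> [] -> Q <> [] ->
  (forall u, In u U -> slope u = a /\ 0 < snd u) ->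
  (forall q, In q Q -> slope q = b /\ 0 < snd q) ->
  exists E, NoDup E /\ (length Q + length U = S (length E))%nat /\
    forall r, In r E -> a < r < b /\ exists u q, In u U /\ In q Q /\ r = mediant u q.
Proof.
  intros Hab HU HQ HUne HQne HUline HQline.
  assert (Hheight : forall (P : list (R * R)) s,
            (forall p, In p P -> slope p = s /\ 0 < snd p) ->
            forall y, In y (map snd P) -> exists p, In p P /\ y = snd p /\ 0 < y).
  { intros P s HPline y Hy; apply in_map_iff in Hy as [p [<- Hp]].
    exists p; split; [|split]; auto; apply HPline; auto. }
  pose proof (Hheight Q b HQline) as HW; pose proof (Hheight U a HUline) as HY.
  destruct (staircase (fun w y => line_mediant a b y w) (map snd Q) (map snd U))
    as [E [HE [HlenE HEin]]]; eauto using NoDup_heights_on_line.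
  - destruct Q; [congruence|discriminate].
  - destruct U; [congruence|discriminate].
  - intros w w' y Hw Hw' Hy Hlt.
    destruct (HW w Hw) as [_ [_ [_ ?]]]; destruct (HW w' Hw') as [_ [_ [_ ?]]];
      destruct (HY y Hy) as [_ [_ [_ ?]]].
    apply line_mediant_lt; nra.
  - intros w y y' Hw Hy Hy' Hlt.
    destruct (HW w Hw) as [_ [_ [_ ?]]]; destruct (HY y Hy) as [_ [_ [_ ?]]];
      destruct (HY y' Hy') as [_ [_ [_ ?]]].
    apply line_mediant_lt; nra.
  - exists E; split; [|split]; [auto|rewrite <- !(length_map snd); auto|].
    intros r Hr; destruct (HEin r Hr) as [w [y [Hw [Hy ->]]]].
    destruct (HW w Hw) as [q [Hq [-> Hwpos]]]; destruct (HY y Hy) as [u [Hu [-> Hypos]]].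
    destruct (HQline q Hq) as [Hbq _]; destruct (HUline u Hu) as [Hau _].
    split; [apply line_mediant_between; auto|].
    exists u, q; split; [|split]; auto.
    rewrite mediant_on_lines, Hau, Hbq; auto.
Qed.

Definition has_slope (s : R) (p : R * R) : bool :=
  if Req_EM_T (slope p) s then true else false.

Lemma has_slope_spec s p : has_slope s p = true <-> slope p = s.
Proof. unfold has_slope; destruct Req_EM_T; split; congruence. Qed.

Definition max_slope (P : list (R * R)) : R := MaxRlist (map slope P).
Definition min_slope (P : list (R * R)) : R := MinRlist (map slope P).

Lemma max_slope_ge P p : In p P -> slope p <= max_slope P.
Proof. intros Hp; apply MaxRlist_P1, in_map; auto. Qed.

Lemma min_slope_le P p : In p P -> min_slope P <= slope p.
Proof. intros Hp; apply MinRlist_P1, in_map; auto. Qed.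

Lemma max_slope_attained P : P <> [] -> exists p, In p P /\ slope p = max_slope P.
Proof.
  intros Hne; assert (Hslopes : map slope P <> []) by (destruct P; [congruence|discriminate]).
  apply MaxRlist_In, in_map_iff in Hslopes as [p [Hs Hp]]; exists p; auto.
Qed.

Lemma min_slope_attained P : P <> [] -> exists p, In p P /\ slope p = min_slope P.
Proof.
  intros Hne; assert (Hslopes : map slope P <> []) by (destruct P; [congruence|discriminate]).
  apply MinRlist_In, in_map_iff in Hslopes as [p [Hs Hp]]; exists p; auto.
Qed.

Definition top_line (P : list (R * R)) := filter (has_slope (max_slope P)) P.
Definition bottom_line (P : list (R * R)) := filter (has_slope (min_slope P)) P.
Definition below_top (P : list (R * R)) :=
  filter (fun p => negb (has_slope (max_slope P) p)) P.

Lemma In_top_line P p : In p (top_line P) <-> In p P /\ slope p = max_slope P.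
Proof. unfold top_line; rewrite filter_In, has_slope_spec; tauto. Qed.

Lemma In_below_top P p : In p (below_top P) <-> In p P /\ slope p < max_slope P.
Proof.
  unfold below_top, has_slope; rewrite filter_In.
  destruct Req_EM_T as [Heq | Hne]; simpl; split; intros [Hp Hs]; split; auto;
    try discriminate; try lra.
  destruct (Rle_lt_or_eq_dec _ _ (max_slope_ge P p Hp)); tauto.
Qed.

Lemma top_line_nonempty P : P <> [] -> top_line P <> [].
Proof.
  intros Hne Hnil; destruct (max_slope_attained P Hne) as [p [Hp Hs]].
  assert (Hin : In p (top_line P)) by (apply In_top_line; auto).
  rewrite Hnil in Hin; destruct Hin.
Qed.

Lemma length_top_below P : (length (top_line P) + length (below_top P) = length P)%nat.
Proof. apply filter_length. Qed.

Lemma below_top_nil_min_slope P : P <> [] -> below_top P = [] -> min_slope P = max_slope P.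
Proof.
  intros Hne Hnil; destruct (min_slope_attained P Hne) as [p [Hp Hs]].
  destruct (Rle_lt_or_eq_dec _ _ (max_slope_ge P p Hp)) as [Hlt | Heq]; [|congruence].
  assert (Hin : In p (below_top P)) by (apply In_below_top; auto).
  rewrite Hnil in Hin; destruct Hin.
Qed.

Lemma max_slope_below_top P :
  below_top P <> [] -> max_slope (below_top P) < max_slope P.
Proof.
  intros Hne; destruct (max_slope_attained _ Hne) as [p [Hp <-]].
  apply In_below_top in Hp; tauto.
Qed.

Lemma min_slope_below_top P :
  below_top P <> [] -> min_slope (below_top P) = min_slope P.
Proof.
  intros Hne.
  destruct (min_slope_attained _ Hne) as [p' [Hp' Hs']].
  destruct (min_slope_attained P) as [p [Hp Hs]];
    [intros ->; destruct Hne; reflexivity|].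
  apply In_below_top in Hp' as [HpP Hlt].
  assert (Hpbelow : In p (below_top P)).
  { apply In_below_top; split; auto. pose proof (min_slope_le P p' HpP); lra. }
  pose proof (min_slope_le _ _ Hpbelow); pose proof (min_slope_le _ _ HpP); lra.
Qed.

Lemma bottom_line_below_top P :
  below_top P <> [] -> bottom_line (below_top P) = bottom_line P.
Proof.
  intros Hne; unfold bottom_line; rewrite min_slope_below_top by auto.
  unfold below_top; apply filter_filter_impl.
  intros p Hp; apply has_slope_spec in Hp; apply Bool.negb_true_iff.
  destruct (has_slope (max_slope P) p) eqn:E; [|reflexivity].
  apply has_slope_spec in E.
  destruct (max_slope_attained (below_top P)) as [q [Hq _]]; auto.
  apply In_below_top in Hq as [HqP Hlt].
  pose proof (min_slope_le P q HqP); pose proof (max_slope_ge P q HqP); lra.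
Qed.

Lemma NoDup_app_stacked (L E : list R) (s t : R) :
  s < t -> NoDup L -> NoDup E -> (forall r, In r L -> r <= s) ->
  (forall r, In r E -> s < r < t) ->
  NoDup (L ++ E ++ [t]) /\ forall r, In r (L ++ E ++ [t]) -> r <= t.
Proof.
  intros Hst HL HE HLs HEst; split.
  - apply NoDup_app; [auto| |].
    + apply NoDup_app; [auto|constructor; [intros []|constructor]|].
      intros r Hr [<-|[]]; apply HEst in Hr; lra.
    + intros r Hr Hr'; apply HLs in Hr.
      apply in_app_or in Hr' as [Hr'|[<-|[]]]; [apply HEst in Hr'|]; lra.
  - intros r Hr; apply in_app_or in Hr as [Hr|Hr];
      [|apply in_app_or in Hr as [Hr|[<-|[]]]].
    + apply HLs in Hr; lra.
    + apply HEst in Hr; lra.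
    + lra.
Qed.

Lemma mediants_lower_bound (P : list (R * R)) :
  NoDup P -> P <> [] -> (forall p, In p P -> 0 < snd p) ->
  exists L, NoDup L /\ incl L (mediants P) /\ (forall r, In r L -> r <= max_slope P) /\
    (2 * length P + 1 <= length L + length (top_line P) + length (bottom_line P))%nat.
Proof.
  remember (length P) as n eqn:Hn.
  revert P Hn; induction n as [n IH] using lt_wf_ind; intros P Hn HP HPne Hpos.
  destruct (max_slope_attained P HPne) as [ptop [Hptop Hstop]].
  assert (Hsplit := length_top_below P).
  assert (Hmax : In (max_slope P) (mediants P)).
  { rewrite <- Hstop, <- mediant_diag by auto; apply In_mediants; auto. }
  assert (Hcase : below_top P = [] \/ below_top P <> [])
    by (destruct (below_top P); [left | right]; congruence).
  destruct Hcase as [Hnil | HP'ne].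
  - assert (Hflat : bottom_line P = top_line P).
    { unfold bottom_line, top_line; rewrite below_top_nil_min_slope; auto. }
    rewrite Hnil in Hsplit.
    exists [max_slope P]; split; [|split; [|split]].
    + constructor; [intros []|constructor].
    + intros r [<-|[]]; auto.
    + intros r [<-|[]]; lra.
    + rewrite Hflat; simpl in *; lia.
  - set (P' := below_top P) in *.
    assert (HP'sub : incl P' P) by (intros p Hp; apply In_below_top in Hp; tauto).
    assert (Htop : top_line P <> []) by (apply top_line_nonempty; auto).
    assert (Htop_len : (length (top_line P) >= 1)%nat)
      by (destruct (top_line P); [congruence|simpl; lia]).
    destruct (IH (length P') ltac:(lia) P') as [L' [HL' [HL'med [HL'le HL'len]]]]; auto.
    + apply NoDup_filter; auto.
    + assert (Hs : max_slope P' < max_slope P) by (apply max_slope_below_top; auto).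
      destruct (mediants_between_lines (top_line P') (top_line P) (max_slope P') (max_slope P))
        as [E [HE [HElen HEin]]]; auto using top_line_nonempty.
      * apply NoDup_filter, NoDup_filter; auto.
      * apply NoDup_filter; auto.
      * intros u Hu; apply In_top_line in Hu as [Hu Hsu]; split; auto.
      * intros q Hq; apply In_top_line in Hq as [Hq Hsq]; split; auto.
      * destruct (NoDup_app_stacked L' E (max_slope P') (max_slope P)) as [HLnd HLle]; auto.
        { intros r Hr; apply HEin in Hr; tauto. }
        exists (L' ++ E ++ [max_slope P]); split; [|split; [|split]]; auto.
        -- intros r Hr; apply in_app_or in Hr as [Hr|Hr];
             [|apply in_app_or in Hr as [Hr|[<-|[]]]]; auto.
           ++ apply (mediants_incl P P'); auto.
           ++ apply HEin in Hr as [_ [u [q [Hu [Hq ->]]]]].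
              apply In_mediants; [apply HP'sub|]; apply In_top_line in Hu, Hq; tauto.
        -- assert (Hbottom : bottom_line P' = bottom_line P)
             by (apply bottom_line_below_top; auto).
           rewrite !length_app, <- Hbottom; simpl; lia.
Qed.

Lemma cross_ratios_eq a b c d : 0 < a -> 0 < c -> 0 < d -> a / c = b / d ->
  (b / c <= a / c /\ a / d <= b / d) \/ (a / c <= b / c /\ b / d <= a / d) ->
  a = b /\ c = d.
Proof.
  intros Ha Hc Hd Hratio Hside.
  assert (Hle : forall x y z, 0 < z -> x / z <= y / z -> x <= y)
    by (intros x y z Hz Hxy; apply Rmult_le_reg_r with (/ z); [apply Rinv_0_lt_compat|]; auto).
  assert (Hab : a = b)
    by (destruct Hside as [[H1 H2]|[H1 H2]]; apply Hle in H1, H2; auto; lra).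
  subst b; split; auto.
  symmetry; apply Rdiv_eq_reg_l with a; [|lra]; auto.
Qed.

Lemma extreme_line_prod_length_le_1 (A : list R) (s : R) :
  NoDup A -> (forall a, In a A -> 0 < a) ->
  (forall p, In p (list_prod A A) -> slope p <= s) \/
  (forall p, In p (list_prod A A) -> s <= slope p) ->
  (length (filter (has_slope s) (list_prod A A)) <= 1)%nat.
Proof.
  intros HA Hpos Hextreme.
  apply length_le_1; [apply NoDup_filter, NoDup_list_prod; auto|].
  intros [a c] [b d] Hac Hbd.
  apply filter_In in Hac as [Hac Hsac], Hbd as [Hbd Hsbd].
  apply has_slope_spec in Hsac, Hsbd.
  apply in_prod_iff in Hac as [Ha Hc], Hbd as [Hb Hd].
  assert (Hbc : In (b, c) (list_prod A A)) by (apply in_prod_iff; auto).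
  assert (Had : In (a, d) (list_prod A A)) by (apply in_prod_iff; auto).
  assert (Hside : (slope (b, c) <= slope (a, c) /\ slope (a, d) <= slope (b, d)) \/
                  (slope (a, c) <= slope (b, c) /\ slope (b, d) <= slope (a, d))).
  { rewrite Hsac, Hsbd.
    destruct Hextreme as [Hext|Hext]; [left|right]; split; apply Hext; auto. }
  unfold slope in *; simpl in *.
  destruct (cross_ratios_eq a b c d) as [-> ->]; auto; congruence.
Qed.

Lemma mediants_prod_incl_ratiolist (A : list R) : incl (mediants (list_prod A A)) (ratiolist A).
Proof.
  assert (Hsum : forall a b, In a A -> In b A -> In (a + b) (sumlist A)).
  { intros a b Ha Hb; apply in_flat_map; exists a; split; auto; apply in_map; auto. }
  intros r Hr; apply in_flat_map in Hr as [[a c] [Hac Hr]].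
  apply in_map_iff in Hr as [[b d] [<- Hbd]].
  apply in_prod_iff in Hac as [Ha Hc], Hbd as [Hb Hd].
  apply in_flat_map; exists (a + b); split; auto.
  apply in_map_iff; exists (c + d); split; auto.
Qed.

Theorem theorem1 (A : list R) :
  NoDup A -> A <> nil -> (forall a, In a A -> 0 < a) ->
  (2 * length A * length A - 1 <= ratio_card A)%nat.
Proof.
  intros HA HAne Hpos.
  set (P := list_prod A A).
  assert (HPne : P <> []) by (destruct A as [|a A']; [congruence|discriminate]).
  assert (Hlen : length P = (length A * length A)%nat) by apply length_prod.
  destruct (mediants_lower_bound P) as [L [HL [HLmed [_ HLlen]]]]; auto.
  - apply NoDup_list_prod; auto.
  - intros [a c] Hp; apply in_prod_iff in Hp; simpl; apply Hpos; tauto.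
  - assert (Htop : (length (top_line P) <= 1)%nat)
      by (apply extreme_line_prod_length_le_1; auto; left; apply max_slope_ge).
    assert (Hbottom : (length (bottom_line P) <= 1)%nat)
      by (apply extreme_line_prod_length_le_1; auto; right; apply min_slope_le).
    assert (HLcard : (length L <= ratio_card A)%nat).
    { apply NoDup_incl_length; auto.
      intros r Hr; apply nodup_In, mediants_prod_incl_ratiolist, HLmed; auto. }
    lia.
Qed.
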